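(* Let $p\ge 1$ and let $\hat\lambda_1,\ldots,\hat\lambda_p$ be mutually distinct complex numbers lying in the open left half-plane $\{s\in\mathbb{C}:\operatorname{Re}s<0\}$, such that the set $\{\hat\lambda_1,\ldots,\hat\lambda_p\}$ is closed under complex conjugation. Define $$\beta_j=\frac{\prod_{l=1}^{p}(\hat\lambda_j+\hat\lambda_l)}{\prod_{l=1,\,l\neq j}^{p}(\hat\lambda_j-\hat\lambda_l)},\qquad j=1,\ldots,p,$$ and $$\widehat d(s)=1+\sum_{j=1}^{p}\frac{\beta_j}{s-\hat\lambda_j}.$$ Then $|\widehat d(\mathrm{i}\omega)|=1$ for every $\omega\in\mathbb{R}$ (where $\mathrm{i}=\sqrt{-1}$). Consequently, for any sampling nodes $\xi_1,\ldots,\xi_\ell$ on the imaginary axis, the diagonal scaling matrix $\widehat\Delta=\mathrm{diag}\big(1/|\widehat d(\xi_i)|\big)_{i=1}^{\ell}$ is unitary, so for any matrix $\mathcal{A}\in\mathbb{C}^{\ell\times m}$ and vector $h\in\mathbb{C}^{\ell}$ the weighted least-squares problem $\min_x\|\widehat\Delta(\mathcal{A}x-h)\|_2$ has the same solutions as the unweighted problem $\min_x\|\mathcal{A}x-h\|_2$.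
   Context: This arises in Vector Fitting, where a rational approximant is written in barycentric form $\widehat n(s)/\widehat d(s)$ with poles (nodes) $\hat\lambda_j$, and each iteration solves a least-squares problem whose rows are weighted by $1/|\widehat d(\xi_i)|$ at the sampling nodes $\xi_i$. The $\hat\lambda_j$ here are the mirror images $-\lambda$ of unstable poles $\lambda$ (poles in the open right half-plane) of the current denominator; the $\beta_j$ are chosen so that the zeros of $\widehat d$ are the original unstable poles $-\hat\lambda_j$. *)

(* Complex numbers are modelled by an arbitrary
   numClosedFieldType C (algebraically closed num field with 'i, 'Re, conjC);
   this includes the complex numbers, so the statement is (more) general. *)
From HB Require Import structures.
From mathcomp Require Import all_boot all_order all_algebra.
Set Implicit Arguments. Unset Strict Implicit. Unset Printing Implicit Defensive.
Import Order.TTheory GRing.Theory Num.Theory.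
Local Open Scope ring_scope.

Section VF.
Variable C : numClosedFieldType.

Definition vf_beta (p : nat) (lam : 'I_p -> C) (j : 'I_p) : C :=
  (\prod_(l < p) (lam j + lam l)) / (\prod_(l < p | l != j) (lam j - lam l)).

Definition vf_dhat (p : nat) (lam : 'I_p -> C) (s : C) : C :=
  1 + \sum_(j < p) vf_beta lam j / (s - lam j).

Definition vf_Delta (p l : nat) (lam : 'I_p -> C) (xi : 'I_l -> C) : 'M[C]_l :=
  diag_mx (\row_(i < l) (`|vf_dhat lam (xi i)|)^-1).

Definition ctrmx (m n : nat) (M : 'M[C]_(m, n)) : 'M[C]_(n, m) :=
  (map_mx (@Num.conj C) M)^T.

Definition unitary_mx (n : nat) (M : 'M[C]_n) : Prop :=
  ctrmx M *m M = 1%:M /\ M *m ctrmx M = 1%:M.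

Definition vnorm2 (n : nat) (v : 'cV[C]_n) : C :=
  sqrtC (\sum_(i < n) `|v i 0| ^+ 2).

Definition wlsq_min (l m : nat) (W : 'M[C]_l) (A : 'M[C]_(l, m)) (h : 'cV[C]_l)
  (x : 'cV[C]_m) : Prop :=
  forall y : 'cV[C]_m, vnorm2 (W *m (A *m x - h)) <= vnorm2 (W *m (A *m y - h)).

Definition lsq_min (l m : nat) (A : 'M[C]_(l, m)) (h : 'cV[C]_l)
  (x : 'cV[C]_m) : Prop :=
  forall y : 'cV[C]_m, vnorm2 (A *m x - h) <= vnorm2 (A *m y - h).
End VF.

From mathcomp Require Import all_boot all_order all_algebra.
Import Order.TTheory GRing.Theory Num.Theory.
Set Implicit Arguments. Unset Strict Implicit. Unset Printing Implicit Defensive.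
Local Open Scope ring_scope.

(* Clearing denominators, dhat(s) = prod_l (s + lam_l) / prod_l (s - lam_l):
   the numerator minus the denominator is a polynomial of degree < p whose
   Lagrange interpolation at the nodes lam_j has exactly the coefficients
   beta_j.  On the imaginary axis |s + lam_l| = |s - lam_l^*|, and since
   the nodes are closed under conjugation the two products have the same
   modulus.  Hence Delta is the identity for imaginary sampling nodes. *)

Lemma size_subr_lt (R : nzRingType) (P Q : {poly R}) :
  P != 0 -> size P = size Q -> lead_coef P = lead_coef Q ->
  (size (P - Q)%R < size P)%N.
Proof.
rewrite -size_poly_gt0 => P_gt0 sPQ lPQ.
rewrite -(prednK P_gt0) ltnS; apply/leq_sizeP => j.
rewrite leq_eqVlt => /orP [/eqP <- | lt_j]; rewrite coefB.
  by move: lPQ; rewrite !lead_coefE -sPQ => ->; rewrite subrr.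
by rewrite !nth_default ?subr0 // -?sPQ -(prednK P_gt0).
Qed.

Lemma size_prod_XsubC_ord (R : idomainType) (n : nat) (mu : 'I_n -> R) :
  size (\prod_(l < n) ('X - (mu l)%:P)) = n.+1.
Proof. by rewrite size_prod_XsubC /index_enum -enumT size_enum_ord. Qed.

Section NumClosedField.
Variable C : numClosedFieldType.

Lemma conjC_Re0 (s : C) : 'Re s = 0 -> s^* = - s.
Proof.
by rewrite ReE => /eqP; rewrite mulf_eq0 invr_eq0 pnatr_eq0 orbF addrC addr_eq0 => /eqP.
Qed.

Lemma normr_sub_Re0 (s a : C) : 'Re s = 0 -> `|s - a| = `|s + a^*|.
Proof. by move=> Re_s; rewrite -[LHS]norm_conjC rmorphB /= (conjC_Re0 Re_s) -opprD normrN. Qed.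

Lemma ctrmx1 (n : nat) : ctrmx (1%:M : 'M[C]_n) = 1%:M.
Proof. by apply/matrixP => i j; rewrite !mxE eq_sym; case: eqP; rewrite ?conjC1 ?conjC0. Qed.

Lemma unitary_mx1 (n : nat) : unitary_mx (1%:M : 'M[C]_n).
Proof. by rewrite /unitary_mx ctrmx1 mul1mx. Qed.

Lemma wlsq_min1 (l m : nat) (A : 'M[C]_(l, m)) (h : 'cV[C]_l) (x : 'cV[C]_m) :
  wlsq_min 1%:M A h x <-> lsq_min A h x.
Proof. by split=> x_min y; have := x_min y; rewrite !mul1mx. Qed.

End NumClosedField.

Section MirrorNodes.
Variables (C : numClosedFieldType) (p : nat) (lam : 'I_p -> C).
Hypothesis lam_inj : injective lam.

Lemma size_prod_XsubC_ord_neq (j : 'I_p) :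
  size (\prod_(l < p | l != j) ('X - (lam l)%:P)) = p.
Proof.
have := size_prod_XsubC_ord lam; rewrite (bigD1 j) //= size_monicM ?monicXsubC //.
  by rewrite size_XsubC add2n => -[].
exact/monic_neq0/monic_prod_XsubC.
Qed.

Lemma prod_sub_lam_neq0 (j : 'I_p) : \prod_(l < p | l != j) (lam j - lam l) != 0.
Proof.
apply/prodf_neq0 => l lj; rewrite subr_eq0; apply: contra lj => /eqP /lam_inj ->.
exact: eqxx.
Qed.

(* Both sides are monic of degree p, so their difference has degree < p,
   and it vanishes at the p distinct nodes lam k. *)
Lemma vf_beta_partial_fraction :
  \prod_(l < p) ('X - (- lam l)%:P) = \prod_(l < p) ('X - (lam l)%:P)
   + \sum_(j < p) vf_beta lam j *: \prod_(l < p | l != j) ('X - (lam l)%:P).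
Proof.
set N := \prod_(l < p) _; set D := \prod_(l < p) _; set S := \sum_(j < p) _.
apply/eqP; rewrite -subr_eq0 opprD addrA; apply/eqP.
apply: (@roots_geq_poly_eq0 _ _ [seq lam k | k <- enum 'I_p]).
- apply/allP => _ /mapP [k _ ->].
  have D_k : D.[lam k] = 0.
    by rewrite horner_prod (bigD1 k) //= hornerXsubC subrr mul0r.
  have S_k : S.[lam k] = \prod_(l < p) (lam k + lam l).
    rewrite horner_sum (bigD1 k) //= [X in _ + X]big1 => [|j jk]; last first.
      rewrite hornerZ horner_prod (bigD1 k) 1?eq_sym //=.
      by rewrite hornerXsubC subrr mul0r mulr0.
    rewrite addr0 hornerZ horner_prod /vf_beta.
    under eq_bigr do rewrite hornerXsubC.
    by rewrite divfK // prod_sub_lam_neq0.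
  have N_k : N.[lam k] = \prod_(l < p) (lam k + lam l).
    by rewrite horner_prod; under eq_bigr do rewrite hornerXsubC opprK.
  by rewrite /root !hornerE D_k S_k N_k subr0 subrr.
- by rewrite map_inj_uniq // enum_uniq.
rewrite size_map size_enum_ord.
apply: leq_trans (size_polyD _ _) _; rewrite geq_max; apply/andP; split.
  have N_size : size N = p.+1 by apply: size_prod_XsubC_ord.
  rewrite -ltnS -N_size size_subr_lt // ?N_size ?size_prod_XsubC_ord //.
    by rewrite -size_poly_gt0 N_size.
  by rewrite !lead_coef_prod_XsubC.
rewrite size_polyN; apply: leq_trans (size_sum _ _ _) _.
apply/bigmax_leqP => j _; apply: leq_trans (size_scale_leq _ _) _.
by rewrite size_prod_XsubC_ord_neq.
Qed.

Lemma vf_dhat_prod (s : C) : (forall j, s != lam j) ->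
  vf_dhat lam s = (\prod_(l < p) (s + lam l)) / \prod_(l < p) (s - lam l).
Proof.
move=> s_notin.
have s_sub_neq0 j : s - lam j != 0 by rewrite subr_eq0.
have := congr1 (horner^~ s) vf_beta_partial_fraction.
rewrite /= hornerD horner_sum !horner_prod.
under eq_bigr do rewrite hornerXsubC opprK.
under [\prod_(l < p) ('X - _).[s]]eq_bigr do rewrite hornerXsubC.
under [\sum_(j < p) _]eq_bigr do rewrite hornerZ horner_prod.
have D_neq0 : \prod_(l < p) (s - lam l) != 0 by exact/prodf_neq0.
move=> ->; rewrite /vf_dhat mulrDl divff //; congr (1 + _).
rewrite mulr_suml; apply: eq_bigr => j _.
under eq_bigr do rewrite hornerXsubC.
rewrite [X in _ = _ / X](bigD1 j) //= invfM [_^-1 / _]mulrC -!mulrA mulVKf //.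
by apply/prodf_neq0 => l _.
Qed.

Hypothesis lam_Re : forall j, 'Re (lam j) < 0.
Hypothesis lam_conj : forall j, exists k, lam k = (lam j)^*.

Lemma conj_closed_perm :
  exists2 sg : 'I_p -> 'I_p, injective sg & forall j, lam (sg j) = (lam j)^*.
Proof.
have lam_conjb j : exists k, lam k == (lam j)^*.
  by have [k <-] := lam_conj j; exists k.
pose sg j := xchoose (lam_conjb j).
have lam_sg j : lam (sg j) = (lam j)^* by exact/eqP/(xchooseP (lam_conjb j)).
exists sg => // a b /(congr1 lam).
by rewrite !lam_sg => /(can_inj conjCK) /lam_inj.
Qed.

Lemma prod_normr_sub_add_Re0 (s : C) : 'Re s = 0 ->
  \prod_(l < p) `|s - lam l| = \prod_(l < p) `|s + lam l|.
Proof.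
move=> Re_s; have [sg sg_inj lam_sg] := conj_closed_perm.
rewrite [RHS](reindex_inj sg_inj); apply: eq_bigr => l _.
by rewrite lam_sg normr_sub_Re0.
Qed.

Lemma vf_dhat_norm_Re0 (s : C) : 'Re s = 0 -> `|vf_dhat lam s| = 1.
Proof.
move=> Re_s.
have s_notin j : s != lam j.
  by apply: contraTneq (lam_Re j) => <-; rewrite Re_s ltxx.
have D_neq0 : \prod_(l < p) `|s - lam l| != 0.
  by apply/prodf_neq0 => l _; rewrite normr_eq0 subr_eq0.
by rewrite vf_dhat_prod // normf_div !normr_prod -prod_normr_sub_add_Re0 // divff.
Qed.

Lemma vf_Delta_Re0 (l : nat) (xi : 'I_l -> C) :
  (forall i, 'Re (xi i) = 0) -> vf_Delta lam xi = 1%:M.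
Proof.
by move=> xi_Re; apply/matrixP => i j; rewrite !mxE vf_dhat_norm_Re0 // invr1.
Qed.

End MirrorNodes.

Theorem proposition4p1 (C : numClosedFieldType) (p : nat) (lam : 'I_p -> C) :
  (0 < p)%N ->
  injective lam ->
  (forall j, 'Re (lam j) < 0) ->
  (forall j, exists k, lam k = (lam j)^*) ->
  (forall omega : C, omega \is Num.real -> `|vf_dhat lam ('i * omega)| = 1) /\
  (forall (l m : nat) (xi : 'I_l -> C),
     (forall i, 'Re (xi i) = 0) ->
     unitary_mx (vf_Delta lam xi) /\
     (forall (A : 'M[C]_(l, m)) (h : 'cV[C]_l) (x : 'cV[C]_m),
        wlsq_min (vf_Delta lam xi) A h x <-> lsq_min A h x)).
Proof.
move=> _ lam_inj lam_Re lam_conj; split=> [omega omega_real | l m xi xi_Re].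
  by apply: vf_dhat_norm_Re0 => //; rewrite ReMil (Creal_ImP _ omega_real) oppr0.
rewrite vf_Delta_Re0 //; split=> [|A h x]; [exact: unitary_mx1 | exact: wlsq_min1].
Qed.
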